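(* Let $S,T\subseteq\mathbb{Z}_{>0}$ be finite with $T\preceq S$, and let $x$ be such that $|T_{<x}|=|S_{\le x}|$. Then $(T\triangleleft S)(j)=T(j)$ for every $j\le|T_{<x}|$.
   Context: For a finite set $S\subseteq\mathbb{Z}_{>0}$, $S(i)$ denotes its $i$th smallest element, $S_{<x}=\{s\in S:s<x\}$, $S_{\le x}=\{s\in S:s\le x\}$. $T\preceq S$ means $|T|\ge|S|$ and $T(i)<S(i)$ for all $i\in[|S|]$. For finite $S,T$, $T\triangleleft S$ is computed by going through $S$ from largest to smallest; each $s$ picks the largest element of $T$ less than $s$ not yet picked (if one exists); $T\triangleleft S$ is the set of picked elements. *)

From mathcomp Require Import all_boot.
Set Implicit Arguments. Unset Strict Implicit. Unset Printing Implicit Defensive.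

(* A finite set S of positive integers is represented by a duplicate-free
   list of naturals, all positive (the order of the list is irrelevant). *)
Definition posfinset (S : seq nat) : bool := uniq S && all (fun s => 0 < s) S.

(* S(i): the i-th smallest element of S, 1-indexed. *)
Definition elt (S : seq nat) (i : nat) : nat := nth 0 (sort leq S) i.-1.

Definition card_lt (S : seq nat) (x : nat) : nat := count (fun s => s < x) S.
Definition card_le (S : seq nat) (x : nat) : nat := count (fun s => s <= x) S.

Definition preceq (T S : seq nat) : Prop :=
  size S <= size T /\ forall i, 1 <= i <= size S -> elt T i < elt S i.

Definition pick_lt (avail : seq nat) (s : nat) : option nat :=
  match [seq t <- avail | t < s] with
  | [::] => None
  | c => Some (\max_(t <- c) t)
  end.

(* state = (elements of T not yet picked, picked elements) *)
Definition tri_step (st : seq nat * seq nat) (s : nat) : seq nat * seq nat :=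
  match pick_lt st.1 s with
  | Some t => (rem t st.1, t :: st.2)
  | None => st
  end.

Definition tri (T S : seq nat) : seq nat :=
  (foldl tri_step (T, [::]) (rev (sort leq S))).2.

(* Write l for the part of S still to be processed and A for the elements of T
   not yet picked.  The greedy pass maintains |l_{<=y}| <= |A_{<y}| for every y:
   initially this is T ⪯ S, and when the largest s of l picks t, the left side fails
   to drop together with the right one only for y in (t, s], where A_{<y} = A_{<s}
   because t is the largest available element below s.  Taking y = s shows that
   every s finds a partner, and summing the drops gives |A_{<x}| <= |T_{<x}| - |S_{<=x}|
   at the end.  So under |T_{<x}| = |S_{<=x}| the whole of T_{<x} gets picked, and the
   picked set agrees with T below x, hence in its first |T_{<x}| order statistics. *)

From mathcomp Require Import all_boot.
From mathcomp Require Import zify.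

Set Implicit Arguments.
Unset Strict Implicit.
Unset Printing Implicit Defensive.

Lemma bigmax_seq_mem (a : nat) (c : seq nat) : \max_(t <- a :: c) t \in a :: c.
Proof.
elim: c a => [|b c IHc] a; first by rewrite big_cons big_nil maxn0 mem_head.
rewrite big_cons; have := IHc b; set M := \max_(t <- b :: c) t => M_in.
by case: (leqP a M) => _; rewrite ?mem_head // inE M_in orbT.
Qed.

Variant pick_lt_spec (A : seq nat) (s : nat) : option nat -> Type :=
  | PickLtNone of (forall a, a \in A -> s <= a) : pick_lt_spec A s None
  | PickLtSome t of t \in A & t < s & (forall a, a \in A -> a < s -> a <= t) :
      pick_lt_spec A s (Some t).

Lemma pick_ltP (A : seq nat) (s : nat) : pick_lt_spec A s (pick_lt A s).
Proof.
rewrite /pick_lt; case E: [seq t <- A | t < s] => [|a c].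
  apply: PickLtNone => b b_in; rewrite leqNgt; apply/negP => b_lt.
  by have := mem_filter (fun t => t < s) b A; rewrite E b_lt b_in.
have := bigmax_seq_mem a c; rewrite -E mem_filter => /andP[M_lt M_in].
apply: PickLtSome => // b b_in b_lt.
by apply: (@leq_bigmax_seq _ _ predT (fun t => t)); rewrite // mem_filter b_lt.
Qed.

Lemma foldl_tri_step_perm (l : seq nat) (st : seq nat * seq nat) :
  perm_eq ((foldl tri_step st l).1 ++ (foldl tri_step st l).2) (st.1 ++ st.2).
Proof.
elim: l st => [|s l IHl] st //=; apply: perm_trans (IHl _) _.
rewrite /tri_step; case: pick_ltP => [_|t t_in _ _] /=; first exact: perm_refl.
by rewrite -cat1s perm_catCA cat1s -cat_cons perm_cat2r perm_sym perm_to_rem.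
Qed.

Definition dominated (l A : seq nat) : Prop :=
  forall y, count (fun s => s <= y) l <= count (fun a => a < y) A.

Lemma dominated_rem (s : nat) (l A : seq nat) (t : nat) :
  all (fun b => b <= s) l -> dominated (s :: l) A ->
  t \in A -> t < s -> (forall a, a \in A -> a < s -> a <= t) ->
  dominated l (rem t A).
Proof.
move=> l_le_s domA t_in t_lt t_max y; rewrite count_rem t_in /=.
have := domA y; have := domA s; rewrite /= leqnn.
have -> : count (fun b => b <= s) l = size l by apply/eqP; rewrite -all_count.
have := count_size (fun b => b <= y) l.
case: (ltnP t y) => [t_lt_y|]; last lia.
case: (leqP y s) => [y_le_s|]; last lia.
suff -> : count (fun a => a < y) A = count (fun a => a < s) A by lia.
(* no element of [A] lies strictly between [t] and [s] *)
apply: eq_in_count => a a_in /=; apply/idP/idP => [a_lt | /(t_max a a_in)].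
  exact: leq_trans a_lt y_le_s.
by move/leq_ltn_trans; apply.
Qed.

Lemma foldl_tri_step_count (l : seq nat) (st : seq nat * seq nat) :
  sorted geq l -> dominated l st.1 ->
  forall y, count (fun a => a < y) (foldl tri_step st l).1
            + count (fun s => s <= y) l <= count (fun a => a < y) st.1.
Proof.
elim: l st => [|s l IHl] st sorted_sl domA y /=; first by rewrite addn0.
have l_le_s : all (fun b => b <= s) l.
  exact: order_path_min (rev_trans leq_trans) sorted_sl.
rewrite [tri_step st s]/tri_step; case: pick_ltP => [A_ge_s | t t_in t_lt t_max] /=.
  have /hasP[a a_in a_lt] : has (fun a => a < s) st.1.
    by rewrite has_count (leq_trans _ (domA s)) //= leqnn.
  by have := A_ge_s a a_in; rewrite leqNgt a_lt.
have dom_rem := dominated_rem l_le_s domA t_in t_lt t_max.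
have := IHl (rem t st.1, t :: st.2) (path_sorted sorted_sl) dom_rem y.
rewrite /= count_rem t_in /=.
have : (t < y) ==> (0 < count (fun a => a < y) st.1).
  by apply/implyP => t_lt_y; rewrite -has_count; apply/hasP; exists t.
have : (s <= y) ==> (t < y) by apply/implyP => /(leq_trans t_lt).
lia.
Qed.

Lemma sort_leq_filter_lt (s : seq nat) (x : nat) :
  sort leq s = sort leq [seq a <- s | a < x] ++ sort leq [seq a <- s | ~~ (a < x)].
Proof.
apply: (sorted_eq leq_trans anti_leq); first exact: (sort_sorted leq_total).
  rewrite (sorted_pairwise leq_trans) pairwise_cat -!(sorted_pairwise leq_trans).
  rewrite !(sort_sorted leq_total) !andbT.
  apply/allrelP => a b; rewrite !mem_sort !mem_filter => /andP[a_lt _] /andP[b_ge _].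
  by rewrite -leqNgt in b_ge; exact: ltnW (leq_trans a_lt b_ge).
rewrite perm_sort -(perm_filterC (fun a => a < x) s).
by apply: perm_cat; rewrite perm_sym perm_sort.
Qed.

Lemma elt_filter_lt (s : seq nat) (x j : nat) :
  0 < j <= count (fun a => a < x) s -> elt [seq a <- s | a < x] j = elt s j.
Proof.
move=> j_bounds; rewrite /elt (sort_leq_filter_lt s x) nth_cat size_sort size_filter.
by rewrite ifT //; lia.
Qed.

Lemma perm_elt (s t : seq nat) : perm_eq s t -> elt s =1 elt t.
Proof.
by move/(perm_sortP leq_total leq_trans anti_leq) => sort_eq j; rewrite /elt sort_eq.
Qed.

Lemma leq_elt (s : seq nat) (i j : nat) :
  0 < i <= j -> j <= size s -> elt s i <= elt s j.
Proof.
move=> i_bounds j_le; apply: (sorted_leq_nth leq_trans leqnn 0 (sort_sorted leq_total s));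
  rewrite ?inE ?size_sort; lia.
Qed.

Lemma elt_count_lt (s : seq nat) (x : nat) :
  0 < count (fun a => a < x) s -> elt s (count (fun a => a < x) s) < x.
Proof.
move=> count_pos; rewrite -(elt_filter_lt (x := x)) ?count_pos ?leqnn //.
have : elt [seq a <- s | a < x] (count (fun a => a < x) s) \in [seq a <- s | a < x].
  by rewrite /elt -(mem_sort leq) mem_nth // size_sort size_filter ltn_predL.
by rewrite mem_filter => /andP[].
Qed.

Lemma leq_count_lt (s : seq nat) (x k : nat) :
  k <= size s -> (forall i, 0 < i <= k -> elt s i < x) -> k <= count (fun a => a < x) s.
Proof.
move=> k_le elt_lt; rewrite -(count_sort leq) -(cat_take_drop k (sort leq s)) count_cat.
have size_take : size (take k (sort leq s)) = k by rewrite size_takel // size_sort.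
have : all (fun a => a < x) (take k (sort leq s)).
  apply/(all_nthP 0) => i; rewrite size_take => i_lt.
  by rewrite nth_take //; apply: (elt_lt i.+1).
by rewrite all_count size_take => /eqP ->; exact: leq_addr.
Qed.

Lemma preceq_dominated (S T : seq nat) : preceq T S -> dominated S T.
Proof.
case=> size_le elt_lt y.
have -> : count (fun s => s <= y) S = count (fun a => a < y.+1) S.
  by apply: eq_count => a; rewrite ltnS.
set k := count _ S; have k_le : k <= size S by exact: count_size.
apply: leq_count_lt => [|i /andP[i_pos i_le]]; first exact: leq_trans size_le.
have k_pos : 0 < k by lia.
apply: leq_trans (elt_lt i _) _; first lia.
by rewrite -ltnS; apply: leq_ltn_trans (elt_count_lt k_pos); apply: leq_elt; lia.
Qed.

Lemma perm_filter_lt_tri (S T : seq nat) (x : nat) :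
  preceq T S -> card_lt T x = card_le S x ->
  perm_eq [seq a <- tri T S | a < x] [seq a <- T | a < x].
Proof.
move=> T_prec_S; rewrite /card_lt /card_le /tri => card_eq.
set l := rev (sort leq S).
have count_l y : count (fun s => s <= y) l = count (fun s => s <= y) S.
  by rewrite count_rev count_sort.
have l_sorted : sorted geq l by rewrite rev_sorted; exact: (sort_sorted leq_total).
have dom_l : dominated l T by move=> y; rewrite count_l; exact: preceq_dominated.
have := @foldl_tri_step_count l (T, [::]) l_sorted dom_l x.
rewrite count_l -card_eq.
have := perm_filter (fun a => a < x) (foldl_tri_step_perm l (T, [::])).
set A := (foldl tri_step _ l).1 => /= + A_bound.
rewrite filter_cat cats0; suff -> : [seq a <- A | a < x] = [::] by [].
apply/eqP; rewrite -size_eq0 size_filter -leqn0.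
by rewrite -(leq_add2r (count (fun a => a < x) T)) add0n.
Qed.

Theorem lemma4p9 (S T : seq nat) (x : nat) :
  posfinset S -> posfinset T -> preceq T S ->
  card_lt T x = card_le S x ->
  forall j, 1 <= j <= card_lt T x -> elt (tri T S) j = elt T j.
Proof.
move=> _ _ T_prec_S card_eq j j_bounds.
have perm_lt := perm_filter_lt_tri T_prec_S card_eq.
have j_le_count : 0 < j <= count (fun a => a < x) (tri T S).
  by rewrite -size_filter (perm_size perm_lt) size_filter.
by rewrite -(elt_filter_lt j_le_count) (perm_elt perm_lt) elt_filter_lt.
Qed.
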